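(* Let $p$ be a prime and $b,c\in\mathbb{Q}_p$ with $|c|_p=1$ and $|b|_p<1$, and let $f(x)=\frac{x}{bx+c}$. Let $S_1(0)=\{x\in\mathbb{Q}_p:|x|_p=1\}$. For every $a\in\mathbb{Q}_p$ and every positive integer $l$ such that the ball $U_{p^{-l}}(a)=\{x\in\mathbb{Q}_p:|x-a|_p\le p^{-l}\}$ is contained in $S_1(0)$, we have $$f(U_{p^{-l}}(a))=U_{p^{-l}}(f(a)).$$
   Context: $\mathbb{Q}_p$ is the field of $p$-adic numbers with norm $|\cdot|_p$. *)

From HB Require Import structures.
From mathcomp Require Import all_boot all_order all_algebra.
From mathcomp Require Import boolp classical_sets reals.
Set Implicit Arguments. Unset Strict Implicit. Unset Printing Implicit Defensive.
Import Order.TTheory GRing.Theory Num.Theory.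
Local Open Scope ring_scope.

Definition rat_padic_abs (R : realType) (p : nat) (q : rat) : R :=
  if q == 0 then 0
  else (p%:R : R) ^ ((logn p `|denq q|)%:Z - (logn p `|numq q|)%:Z).

(* [is_Qp p nv] : the field K together with nv : K -> R is (a model of) the
   field Q_p of p-adic numbers, i.e. a completion of Q with respect to |.|_p:
   nv is an absolute value on K extending |.|_p on Q (embedded via ratr),
   Q is dense in K and K is complete.  Any two such are isometrically
   isomorphic (uniqueness of completion). *)
Record is_Qp (p : nat) (R : realType) (K : fieldType) (nv : K -> R) : Prop := {
  Qp_norm_ge0 : forall x, 0 <= nv x;
  Qp_norm_eq0 : forall x, nv x = 0 -> x = 0;
  Qp_normM : forall x y, nv (x * y) = nv x * nv y;
  Qp_normD : forall x y, nv (x + y) <= nv x + nv y;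
  Qp_norm_rat : forall q : rat, nv (ratr q) = rat_padic_abs R p q;
  Qp_dense : forall (x : K) (e : R), 0 < e -> exists q : rat, nv (x - ratr q) < e;
  Qp_complete : forall u : nat -> K,
    (forall e : R, 0 < e -> exists N, forall m n, (N <= m)%N -> (N <= n)%N ->
       nv (u m - u n) < e) ->
    exists l : K, forall e : R, 0 < e -> exists N, forall n, (N <= n)%N ->
       nv (u n - l) < e
}.

Definition pball (R : realType) (K : fieldType) (nv : K -> R) (a : K) (r : R) : set K :=
  [set x | nv (x - a) <= r].

From HB Require Import structures.
From mathcomp Require Import all_boot all_order all_algebra.
From mathcomp Require Import boolp classical_sets reals.
From mathcomp Require Import ring lra.
Import Order.TTheory GRing.Theory Num.Theory.
Local Open Scope ring_scope.
Local Open Scope classical_set_scope.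

Set Implicit Arguments.
Unset Strict Implicit.
Unset Printing Implicit Defensive.

(* An absolute value that is at most 1 on the integers is non-archimedean:
   expanding (x + y)^n binomially gives |x + y|^n <= (n + 1) max(|x|,|y|)^n,
   and taking n-th roots as n grows gives |x + y| <= max(|x|,|y|).  Hence
   |x| = 1, |b| < 1, |c| = 1 force |bx + c| = 1, and the identity
   f(x) - f(a) = c (x - a) / ((bx + c)(ba + c)) shows that f is an isometry of
   the unit sphere; it is onto the sphere since f(cy / (1 - by)) = y. *)

Lemma bernoulli_ineq (R : realFieldType) (x : R) n :
  0 <= x -> 1 + n%:R * x <= (1 + x) ^+ n.
Proof.
move=> x_ge0; elim: n => [|n IHn]; first by rewrite mul0r addr0 expr0.
have Xn_ge1 : 1 <= (1 + x) ^+ n by rewrite exprn_ege1 // lerDl.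
rewrite exprSr -natr1; nra.
Qed.

Lemma le_of_powers_le_linear (R : archiRealFieldType) (t M : R) : 0 <= M ->
  (forall n, t ^+ n <= n.+1%:R * M ^+ n) -> t <= M.
Proof.
move=> M_ge0 tM; rewrite leNgt; apply/negP => Mt.
have M_gt0 : 0 < M by have := tM 1%N; rewrite !expr1; lra.
have ratio_le n : (t / M) ^+ n <= n.+1%:R.
  by rewrite expr_div_n ler_pdivrMr ?exprn_gt0.
pose d := t / M - 1.
have d_gt0 : 0 < d by rewrite subr_gt0 ltr_pdivlMr // mul1r.
(* By Bernoulli, (1 + n d)^2 <= (t / M)^(2n) <= 2n + 1, false once n d^2 > 3. *)
have sq_le n : (1 + n%:R * d) ^+ 2 <= (2 * n).+1%:R.
  apply: le_trans (ratio_le _); rewrite mulnC exprM.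
  have ratio_ge0 : 0 <= t / M by rewrite divr_ge0 // ltW // (le_lt_trans M_ge0).
  apply: lerXn2r; rewrite ?nnegrE ?exprn_ge0 //.
  - by rewrite addr_ge0 // mulr_ge0 // ltW.
  - by rewrite -(subrKC 1 (t / M)); exact: bernoulli_ineq (ltW d_gt0).
have bound_ge0 : 0 <= 3 / d ^+ 2 by rewrite divr_ge0 ?exprn_ge0 // ltW.
have := archi_boundP bound_ge0; set n := Num.Def.archi_bound _.
rewrite ltr_pdivrMr ?exprn_gt0 // => n_big.
have := sq_le n; rewrite -natr1 natrM; nra.
Qed.

Section AbsoluteValue.

Variables (R : realType) (K : fieldType) (nv : K -> R).
Hypotheses (nv_ge0 : forall x, 0 <= nv x)
  (nv0 : nv 0 = 0) (nv_eq0 : forall x, nv x = 0 -> x = 0)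
  (nvM : forall x y, nv (x * y) = nv x * nv y)
  (nvD : forall x y, nv (x + y) <= nv x + nv y).

Lemma nv_neq0 x : x != 0 -> nv x != 0.
Proof. by apply: contraNneq => /nv_eq0 ->. Qed.

Lemma nv1 : nv 1 = 1.
Proof.
apply: (mulfI (nv_neq0 (oner_neq0 K))).
by rewrite -nvM !mulr1.
Qed.

Lemma nvN x : nv (- x) = nv x.
Proof.
have nvN1 : nv (-1) = 1.
  have := nvM (-1) (-1); rewrite mulrNN mulr1 nv1.
  have := nv_ge0 (-1); nra.
by rewrite -mulN1r nvM nvN1 mul1r.
Qed.

Lemma nvX x n : nv (x ^+ n) = nv x ^+ n.
Proof. by elim: n => [|n IHn]; rewrite ?nv1 // !exprS nvM IHn. Qed.

Lemma nvV x : nv x^-1 = (nv x)^-1.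
Proof.
have [->|x0] := eqVneq x 0; first by rewrite invr0 nv0 invr0.
by apply: (mulfI (nv_neq0 x0)); rewrite -nvM !mulfV ?nv_neq0 ?nv1.
Qed.

Lemma nv_sum I (r : seq I) (P : pred I) (F : I -> K) :
  nv (\sum_(i <- r | P i) F i) <= \sum_(i <- r | P i) nv (F i).
Proof.
elim/big_ind2: _ => [|x1 x2 y1 y2 le1 le2|//]; first by rewrite nv0.
exact: le_trans (nvD _ _) (lerD le1 le2).
Qed.

Hypothesis nv_nat_le1 : forall n, nv n%:R <= 1.

Lemma nvD_le_max x y : nv (x + y) <= Num.max (nv x) (nv y).
Proof.
set M := Num.max _ _; have M_ge0 : 0 <= M by rewrite le_max nv_ge0.
have [xM yM] : nv x <= M /\ nv y <= M by rewrite !le_max !lexx orbT.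
apply: le_of_powers_le_linear => // n.
rewrite -nvX exprDn (le_trans (nv_sum _ _ _)) //.
have -> : n.+1%:R * M ^+ n = \sum_(i < n.+1) M ^+ n.
  by rewrite sumr_const card_ord mulr_natl.
apply: ler_sum => i _.
rewrite -mulr_natr nvM -[M ^+ n]mulr1 ler_pM ?nv_ge0 //.
have -> : M ^+ n = M ^+ (n - i) * M ^+ i by rewrite -exprD subnK // leq_ord.
by rewrite nvM !nvX ler_pM ?exprn_ge0 ?nv_ge0 // lerXn2r ?nnegrE ?nv_ge0.
Qed.

Lemma nvD_eqr x y : nv x < nv y -> nv (x + y) = nv y.
Proof.
move=> lt_xy; apply/eqP; rewrite eq_le; apply/andP; split.
  by rewrite (le_trans (nvD_le_max _ _)) // ge_max lexx ltW.
have := nvD_le_max (- x) (x + y).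
by rewrite addKr nvN le_max leNgt lt_xy.
Qed.

Lemma nv_eq1_neq0 x : nv x = 1 -> x != 0.
Proof. by apply: contraPneq => ->; rewrite nv0 => /esym/eqP; rewrite oner_eq0. Qed.

Lemma nv_eq1_ball a r x : nv a = 1 -> r < 1 -> nv (x - a) <= r -> nv x = 1.
Proof.
move=> nv_a r_lt1 xa_le; rewrite -(subrK a x) nvD_eqr // nv_a.
exact: le_lt_trans r_lt1.
Qed.

Variables b c : K.
Hypotheses (nv_c : nv c = 1) (nv_b_lt1 : nv b < 1).

Let f x := x / (b * x + c).

Lemma nv_mobius_den x : nv x = 1 -> nv (b * x + c) = 1.
Proof. by move=> nv_x; rewrite nvD_eqr // nvM nv_x mulr1 nv_c. Qed.

Lemma mobiusB x y : nv x = 1 -> nv y = 1 ->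
  f x - f y = c * (x - y) / ((b * x + c) * (b * y + c)).
Proof.
move=> /nv_mobius_den/nv_eq1_neq0 x_den /nv_mobius_den/nv_eq1_neq0 y_den.
by rewrite /f; field; rewrite x_den y_den.
Qed.

Lemma nv_mobiusB x y : nv x = 1 -> nv y = 1 -> nv (f x - f y) = nv (x - y).
Proof.
move=> nv_x nv_y; rewrite mobiusB // !nvM nvV nvM.
by rewrite !nv_mobius_den // nv_c mulr1 invr1 mulr1 mul1r.
Qed.

Lemma mobius_onto y : nv y = 1 -> exists2 x, nv x = 1 & f x = y.
Proof.
move=> nv_y; have nv_den : nv (1 - b * y) = 1.
  by rewrite addrC nvD_eqr nv1 // nvN nvM nv_y mulr1.
exists (c * y / (1 - b * y)).
  by rewrite !nvM nvV nv_den nv_c nv_y invr1 !mulr1.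
have b_ctr : b * (c * y) + c * (1 - b * y) = c by ring.
rewrite /f; field.
by rewrite b_ctr (nv_eq1_neq0 nv_c) (nv_eq1_neq0 nv_den).
Qed.

Lemma mobius_ball a r : nv a = 1 -> r < 1 ->
  f @` pball nv a r = pball nv (f a) r.
Proof.
move=> nv_a r_lt1; apply/seteqP; split=> [_ [x xa_le <-]|y yfa_le].
  by rewrite /pball /= nv_mobiusB // (nv_eq1_ball nv_a r_lt1 xa_le).
have nv_fa : nv (f a) = 1.
  by rewrite /f nvM nvV nv_mobius_den // nv_a invr1 mulr1.
have [x nv_x fx_y] := mobius_onto (nv_eq1_ball nv_fa r_lt1 yfa_le).
by exists x => //; rewrite /pball /= -nv_mobiusB // fx_y.
Qed.

End AbsoluteValue.

Lemma Qp_norm0 p (R : realType) (K : fieldType) (nv : K -> R) :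
  is_Qp p nv -> nv 0 = 0.
Proof.
by move=> HK; have := Qp_norm_rat HK 0%:R; rewrite ratr_nat /rat_padic_abs eqxx.
Qed.

Lemma Qp_norm_nat_le1 p (R : realType) (K : fieldType) (nv : K -> R) :
  (0 < p)%N -> is_Qp p nv -> forall n, nv n%:R <= 1.
Proof.
move=> p_gt0 HK n; rewrite -ratr_nat (Qp_norm_rat HK) /rat_padic_abs.
case: eqP => // _; rewrite -[n%:R]/(n%:Z%:~R) numq_int denq_int logn1 sub0r.
by rewrite -exprnN invf_le1 ?exprn_ege1 ?exprn_gt0 ?ler1n ?ltr0n.
Qed.

Theorem lemma4p1 (p : nat) (R : realType) (K : fieldType) (nv : K -> R)
  (hp : prime p) (HK : is_Qp p nv) (b c : K)
  (hc : nv c = 1) (hb : nv b < 1)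
  (a : K) (l : nat) (hl : (0 < l)%N)
  (hsub : pball nv a ((p%:R : R) ^- l) `<=` [set x | nv x = 1]) :
  (fun x => x / (b * x + c)) @` pball nv a ((p%:R : R) ^- l)
  = pball nv (a / (b * a + c)) ((p%:R : R) ^- l).
Proof.
have p_gt1 : (1 : R) < p%:R by rewrite ltr1n prime_gt1.
have r_lt1 : (p%:R : R) ^- l < 1.
  by rewrite invf_lt1 ?exprn_gt0 ?(lt_trans ltr01) // exprn_egt1 // -lt0n.
have nv_a : nv a = 1.
  by apply: (hsub a); rewrite /pball /= subrr (Qp_norm0 HK) invr_ge0 exprn_ge0.
exact: (mobius_ball (Qp_norm_ge0 HK) (Qp_norm0 HK) (Qp_norm_eq0 HK)
  (Qp_normM HK) (Qp_normD HK) (Qp_norm_nat_le1 (prime_gt0 hp) HK) hc hb nv_a).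
Qed.
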